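(* Let $S$ be a monoid and $A$ an $S$-act. Then: (a) for each $n\in\mathbb N$, $a\mapsto[a]$ embeds $A$ into $A^n_1$ and into $A^{\aleph_0}_1$, and with the natural identifications $A^i_1\subseteq A^j_1$ for $i\le j$ and $A^{\aleph_0}_1=\bigcup_{n}A^n_1$; (b) every finite consistent set of equations over $A$ in $m$ variables has a solution in $A^m_1$, hence in $A^n_1$ for every $n\ge m$ and in $A^{\aleph_0}_1$; (c) $A$ is $n$-absolutely pure if and only if $A$ is a retract of $A^n_1$, and $A$ is absolutely pure if and only if $A$ is a retract of $A^{\aleph_0}_1$.
   Context: A (right) $S$-act is a set with an action $(a,s)\mapsto as$ with $a1=a$, $a(st)=(as)t$. Equations over $A$ with variables from a set have the forms $xs=yt$, $xs=xt$, $xs=a$ ($a\in A$); a solution in $B\supseteq A$ is a family in $B$ satisfying them; a set is consistent if it has a solution in some $S$-act containing $A$. $A$ is $n$-absolutely pure if every finite consistent set of equations over $A$ in at most $n$ variables has a solution in $A$; absolutely pure if this holds for all $n$; a retract of $B\supseteq A$ if there is an $S$-morphism $B\to A$ fixing $A$ pointwise. For a set $\Sigma$ of equations, $v(\Sigma)$ is the number of variables occurring in it and $H(\Sigma)=\{(xu,yv):xu=yv\in\Sigma\}$, $K(\Sigma)=\{(xs,a):xs=a\in\Sigma\}$. Canonical first step: let $\Theta(A,m)$ be the collection of all finite consistent sets of equations $\Sigma$ over $A$ with $v(\Sigma)=m$, where variables are chosen so that distinct members of $\bigcup_m\Theta(A,m)$ use pairwise disjoint sets of variables. Let $\Omega_n$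 be the set of all variables occurring in members of $\bigcup_{1\le m\le n}\Theta(A,m)$ and $\Omega_{\aleph_0}=\bigcup_n\Omega_n$. Define $A^n_1=(A\sqcup F_S(\Omega_n))/\kappa(n)$ and $A^{\aleph_0}_1=(A\sqcup F_S(\Omega_{\aleph_0}))/\kappa(\aleph_0)$, where $F_S(\cdot)$ is the free $S$-act, $\kappa(n)$ is the congruence generated by $\bigcup\{H(\Sigma)\cup K(\Sigma):\Sigma\in\Theta(A,m),1\le m\le n\}$, and $\kappa(\aleph_0)$ that generated by $\bigcup\{H(\Sigma)\cup K(\Sigma):\Sigma\in\bigcup_m\Theta(A,m)\}$. *)

From Stdlib Require Import ProofIrrelevance FunctionalExtensionality PropExtensionality List.
From mathcomp Require Import all_boot.
Set Implicit Arguments. Unset Strict Implicit. Unset Printing Implicit Defensive.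

Record monoid := Monoid {
  mcar :> Type;
  mmul : mcar -> mcar -> mcar;
  mone : mcar;
  mmulA : forall x y z, mmul x (mmul y z) = mmul (mmul x y) z;
  mmul1l : forall x, mmul mone x = x;
  mmul1r : forall x, mmul x mone = x }.

Record act (S : monoid) := Act {
  acar :> Type;
  aact : acar -> S -> acar;
  aact1 : forall a, aact a (mone S) = a;
  aactM : forall (a : acar) (s t : S), aact a (@mmul S s t) = aact (aact a s) t }.
Arguments aact {S} _ _ _.

Section Acts.
Variable S : monoid.

Definition is_morphism (A B : act S) (f : A -> B) : Prop :=
  forall a s, f (aact A a s) = aact B (f a) s.

Definition is_embedding (A B : act S) (f : A -> B) : Prop :=
  is_morphism f /\ injective f.

Definition retract (A B : act S) (iota : A -> B) : Prop :=
  exists r : B -> A, is_morphism r /\ forall a, r (iota a) = a.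

Variable A : act S.

(** Equations over A with variables from nat:  x s = y t  (covers x s = x t)
    and  x s = a. *)
Inductive equation : Type :=
  | EqVar (x : nat) (s : S) (y : nat) (t : S)
  | EqConst (x : nat) (s : S) (a : A).

Definition eq_vars (e : equation) : seq nat :=
  match e with EqVar x _ y _ => [:: x; y] | EqConst x _ _ => [:: x] end.

Definition vars (Σ : seq equation) : seq nat := flatten (map eq_vars Σ).
Definition nvars (Σ : seq equation) : nat := size (undup (vars Σ)).

Definition is_solution (B : act S) (iota : A -> B) (sol : nat -> option B)
  (Σ : seq equation) : Prop :=
  forall e, List.In e Σ ->
    match e with
    | EqVar x s y t => exists bx by_, sol x = Some bx /\ sol y = Some by_ /\
                         aact B bx s = aact B by_ t
    | EqConst x s a => exists bx, sol x = Some bx /\ aact B bx s = iota a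
    end.

Definition has_solution_in (B : act S) (iota : A -> B) (Σ : seq equation) :=
  exists sol, is_solution iota sol Σ.

Definition consistent (Σ : seq equation) : Prop :=
  exists (B : act S) (iota : A -> B), is_embedding iota /\ has_solution_in iota Σ.

Definition n_abs_pure (n : nat) : Prop :=
  forall Σ, consistent Σ -> nvars Σ <= n -> has_solution_in (B := A) id Σ.

Definition abs_pure : Prop := forall n, n_abs_pure n.

(** The canonical first step.  [P] is the allowed range of v(Σ):
    [Pn n] = {1..n} gives A^n_1, [Pinf] = {m >= 1} gives A^{aleph_0}_1.
    The variables of the member Σ are tagged by Σ itself, so distinct members
    use disjoint sets of variables. *)
Definition Omega (P : nat -> bool) : Type :=
  {p : seq equation * nat | consistent p.1 /\ P (nvars p.1) /\ p.2 \in vars p.1}.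

(** A ⊔ F_S(Ω) with F_S(Ω) = Ω × S *)
Definition carrier (P : nat -> bool) : Type := (A + (Omega P * S))%type.

Definition cact (P : nat -> bool) (x : carrier P) (s : S) : carrier P :=
  match x with
  | inl a => inl (aact A a s)
  | inr (o, u) => inr (o, @mmul S u s)
  end.

Inductive gen (P : nat -> bool) : carrier P -> carrier P -> Prop :=
  | genH (o1 o2 : Omega P) (u t : S) :
      (sval o1).1 = (sval o2).1 ->
      List.In (EqVar (sval o1).2 u (sval o2).2 t) (sval o1).1 ->
      gen (inr (o1, u)) (inr (o2, t))
  | genK (o : Omega P) (s : S) (a : A) :
      List.In (EqConst (sval o).2 s a) (sval o).1 ->
      gen (inr (o, s)) (inl a).

Inductive kappa (P : nat -> bool) : carrier P -> carrier P -> Prop :=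
  | k_gen x y : gen x y -> kappa x y
  | k_refl x : kappa x x
  | k_sym x y : kappa x y -> kappa y x
  | k_trans x y z : kappa x y -> kappa y z -> kappa x z
  | k_act x y s : kappa x y -> kappa (cact x s) (cact y s).

Definition qcar (P : nat -> bool) : Type :=
  {X : carrier P -> Prop | exists x, X = kappa x}.

Definition cls (P : nat -> bool) (x : carrier P) : qcar P :=
  exist _ (kappa x) (ex_intro _ x erefl).

Lemma qact_proof (P : nat -> bool) (X : qcar P) (s : S) :
  exists z, (fun y => exists x, sval X x /\ kappa (cact x s) y) = kappa z.
Proof.
destruct X as [X [x0 ->]]; exists (cact x0 s); simpl.
apply functional_extensionality => y; apply propositional_extensionality.
split.
- move=> [x [H1 H2]]; apply: k_trans (k_act s H1) H2.
- move=> H; exists x0; split => //; apply: k_refl.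
Qed.

Definition qact (P : nat -> bool) (X : qcar P) (s : S) : qcar P :=
  exist _ _ (qact_proof X s).

Lemma qeq (P : nat -> bool) (X Y : qcar P) : sval X = sval Y -> X = Y.
Proof.
destruct X as [X hX], Y as [Y hY]; simpl => E; subst Y.
f_equal; apply proof_irrelevance.
Qed.

Lemma qact_cls (P : nat -> bool) (x : carrier P) s : qact (cls x) s = cls (cact x s).
Proof.
apply qeq; simpl.
apply functional_extensionality => y; apply propositional_extensionality.
split.
- move=> [x' [H1 H2]]; apply: k_trans (k_act s H1) H2.
- move=> H; exists x; split => //; apply: k_refl.
Qed.

Lemma cls_surj (P : nat -> bool) (X : qcar P) : exists x, X = cls x.
Proof. destruct X as [X [x ->]]; exists x; apply qeq => //. Qed.

Lemma cact1 (P : nat -> bool) (x : carrier P) : cact x (mone S) = x.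
Proof. by case: x => [a|[o u]] /=; rewrite ?aact1 ?mmul1r. Qed.

Lemma cactM (P : nat -> bool) (x : carrier P) s t :
  cact x (@mmul S s t) = cact (cact x s) t.
Proof. by case: x => [a|[o u]] /=; rewrite ?aactM ?mmulA. Qed.

Lemma qact1 (P : nat -> bool) (X : qcar P) : qact X (mone S) = X.
Proof. by have [x ->] := cls_surj X; rewrite qact_cls cact1. Qed.

Lemma qactM (P : nat -> bool) (X : qcar P) s t :
  qact X (@mmul S s t) = qact (qact X s) t.
Proof. by have [x ->] := cls_surj X; rewrite !qact_cls cactM. Qed.

Definition A1 (P : nat -> bool) : act S := Act (@qact1 P) (@qactM P).

Definition emb (P : nat -> bool) (a : A) : A1 P := cls (inl a : carrier P).

Definition lift_Omega (P Q : nat -> bool) (H : forall m, P m -> Q m)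
  (o : Omega P) : Omega Q :=
  let (p, hp) := o in
  exist _ p (match hp with conj h1 (conj h2 h3) => conj h1 (conj (H _ h2) h3) end).

Definition lift_car (P Q : nat -> bool) (H : forall m, P m -> Q m)
  (x : carrier P) : carrier Q :=
  match x with
  | inl a => inl a
  | inr (o, u) => inr (lift_Omega H o, u)
  end.

End Acts.

Definition Pn (n m : nat) : bool := (0 < m) && (m <= n).
Definition Pinf (m : nat) : bool := 0 < m.

Lemma Pn_le (i j : nat) : i <= j -> forall m, Pn i m -> Pn j m.
Proof. by move=> hij m /andP [h1 h2]; rewrite /Pn h1 (leq_trans h2 hij). Qed.

Lemma Pn_inf (n : nat) : forall m, Pn n m -> Pinf m.
Proof. by move=> m /andP []. Qed.

Definition A1n (S : monoid) (A : act S) (n : nat) : act S := A1 A (Pn n).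
Definition A1inf (S : monoid) (A : act S) : act S := A1 A Pinf.

Arguments equation {S} A.
Arguments carrier {S} A P.
Arguments A1 {S} A P.
Arguments emb {S} A P a.
Arguments cls {S A P} x.
Arguments lift_car {S A P Q} H x.
Arguments consistent {S A} Σ.
Arguments nvars {S A} Σ.
Arguments has_solution_in {S A B} iota Σ.
Arguments n_abs_pure {S} A n.
Arguments abs_pure {S} A.
Arguments retract {S A B} iota.
Arguments is_embedding {S A B} f.

From Stdlib Require Import List.
From mathcomp Require Import all_boot.
From Stdlib Require Import ClassicalEpsilon ProofIrrelevance FunctionalExtensionality PropExtensionality.
Set Implicit Arguments. Unset Strict Implicit. Unset Printing Implicit Defensive.

(* A^P_1 adjoins to A a free solution of every consistent Σ whose number of
   variables lies in the range P.  These free solutions solve the systems, and a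
   retraction A^P_1 -> A is the same thing as a choice of solutions in A.  The
   delicate point is that κ_Q identifies no more than κ_P on A ⊔ F_S(Ω_P) when
   P ⊆ Q: map A ⊔ F_S(Ω_Q) into the amalgam, along A, of A^P_1 with a chosen
   extension B_Σ ⊇ A solving each remaining Σ.  This map respects the generating
   pairs, hence κ_Q, and on A ⊔ F_S(Ω_P) it is the quotient map to A^P_1.  For
   P empty, A^P_1 is A itself, so A embeds as well. *)

Section Solutions.
Variables (S : monoid) (A : act S).

Lemma solution_morphism (B C : act S) (iota : A -> B) (jota : A -> C) (f : B -> C)
    (Σ : seq (equation A)) :
  is_morphism f -> (forall a, f (iota a) = jota a) ->
  has_solution_in iota Σ -> has_solution_in jota Σ.
Proof.
move=> f_morph f_iota [sol sol_Σ]; exists (fun x => option_map f (sol x)) => e /sol_Σ.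
case: e => [x s y t|x s a].
- move=> [bx [by_ [-> [-> E]]]]; exists (f bx), (f by_).
  by do 2 split => //; rewrite -!f_morph E.
- by move=> [bx [-> E]]; exists (f bx); split => //; rewrite -f_morph E f_iota.
Qed.

Lemma in_vars (Σ : seq (equation A)) e x :
  List.In e Σ -> x \in eq_vars e -> x \in vars Σ.
Proof.
elim: Σ => [|e' Σ IH] //= [<-|e_Σ] x_e; rewrite /vars /= mem_cat ?x_e //.
by rewrite (IH e_Σ x_e) orbT.
Qed.

Lemma vars_in (Σ : seq (equation A)) x :
  x \in vars Σ -> exists2 e, List.In e Σ & x \in eq_vars e.
Proof.
elim: Σ => [|e Σ IH] //; rewrite /vars /= mem_cat => /orP [x_e|/IH [e' e'_Σ x_e']].
- by exists e; [left|].
- by exists e'; [right|].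
Qed.

Lemma nvars_gt0 (Σ : seq (equation A)) x : x \in vars Σ -> 0 < nvars Σ.
Proof. by rewrite -mem_undup lt0n size_eq0 => x_Σ; apply/eqP => E; rewrite E in x_Σ. Qed.

Lemma solution_defined (B : act S) (iota : A -> B) sol (Σ : seq (equation A)) x :
  is_solution iota sol Σ -> x \in vars Σ -> exists b, sol x = Some b.
Proof.
move=> sol_Σ /vars_in [e /sol_Σ]; case: e => [x1 s y t|x1 s a] /=.
- move=> [bx [by_ [E1 [E2 _]]]]; by rewrite !inE => /orP [] /eqP ->; [exists bx | exists by_].
- by move=> [bx [E _]]; rewrite inE => /eqP ->; exists bx.
Qed.

End Solutions.

Section Quotient.
Variables (S : monoid) (A : act S).

Lemma cls_eq P (x y : carrier A P) : cls x = cls y <-> kappa x y.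
Proof.
split => [E|xy].
- by move: (k_refl y); rewrite -[kappa y]/(sval (cls y)) -E.
- apply: qeq; apply: functional_extensionality => z /=.
  apply: propositional_extensionality; split.
  + exact: k_trans (k_sym xy).
  + exact: k_trans xy.
Qed.

Lemma kappa_respects P (T : Type) (F : carrier A P -> T) (act_T : T -> S -> T) :
  (forall x s, F (cact x s) = act_T (F x) s) ->
  (forall x y, gen x y -> F x = F y) ->
  forall x y, kappa x y -> F x = F y.
Proof.
move=> F_act F_gen x y; elim => [? ? /F_gen|//|? ? _ ->|? ? ? _ -> _ ->|? ? s _ E] //.
by rewrite !F_act E.
Qed.

Definition rep P (X : A1 A P) : carrier A P :=
  proj1_sig (constructive_indefinite_description _ (cls_surj X)).

Lemma rep_cls P (x : carrier A P) : kappa (rep (cls x)) x.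
Proof.
apply/cls_eq; rewrite /rep.
by case: constructive_indefinite_description.
Qed.

Lemma Omega_eq P (o1 o2 : Omega A P) : sval o1 = sval o2 -> o1 = o2.
Proof.
by case: o1 o2 => [p1 h1] [p2 h2] /= E; subst p2; rewrite (proof_irrelevance _ h1 h2).
Qed.

Lemma emb_morphism P : is_morphism (emb A P).
Proof. by move=> a s; rewrite /emb /= qact_cls. Qed.

Variables (P Q : nat -> bool) (H : forall m, P m -> Q m).

Lemma sval_lift (o : Omega A P) : sval (lift_Omega H o) = sval o.
Proof. by case: o => [p [h1 [h2 h3]]]. Qed.

Lemma lift_cact (x : carrier A P) s :
  lift_car H (cact x s) = cact (lift_car H x) s.
Proof. by case: x => [a|[o u]]. Qed.

Lemma lift_kappa (x y : carrier A P) :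
  kappa x y -> kappa (lift_car H x) (lift_car H y).
Proof.
elim=> [? ? [o1 o2 u t E e_Σ|o s a e_Σ]| ? | ? ? _ | ? ? ? _ xy _ yz | ? ? s _ xy].
- by apply/k_gen/genH; rewrite !sval_lift.
- by apply/k_gen/genK; rewrite sval_lift.
- exact: k_refl.
- exact: k_sym.
- exact: k_trans xy yz.
- by rewrite !lift_cact; apply: k_act.
Qed.

Definition liftq (X : A1 A P) : A1 A Q := cls (lift_car H (rep X)).

Lemma liftq_cls (x : carrier A P) : liftq (cls x) = cls (lift_car H x).
Proof. by apply/cls_eq/lift_kappa/rep_cls. Qed.

End Quotient.

Section Amalgam.
Variables (S : monoid) (A : act S).

Record extension := Extension {
  ext_act : act S; ext_inj : A -> ext_act; ext_sol : nat -> option ext_act }.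

Definition solves (Σ : seq (equation A)) (w : extension) : Prop :=
  is_embedding (ext_inj w) /\ is_solution (ext_inj w) (ext_sol w) Σ.

Definition model (Σ : seq (equation A)) : extension :=
  epsilon (inhabits (@Extension A id (fun _ => None))) (solves Σ).

Lemma model_solves Σ : consistent Σ -> solves Σ (model Σ).
Proof.
by move=> [B [iota [iota_emb [sol sol_Σ]]]]; apply: epsilon_spec; exists (Extension iota sol).
Qed.

Variables (C : act S) (e : A -> C).
Hypothesis e_morphism : is_morphism e.

(* The points of each B_Σ outside A are kept apart; the points of A are sent to C via e. *)
Definition amalgam : Type :=
  (C + {Σ : seq (equation A) &
          {b : ext_act (model Σ) | ~ exists a, ext_inj (model Σ) a = b}})%type.

Definition glue Σ (b : ext_act (model Σ)) : amalgam :=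
  match excluded_middle_informative (exists a, ext_inj (model Σ) a = b) with
  | left inA => inl (e (proj1_sig (constructive_indefinite_description _ inA)))
  | right outA => inr (existT _ Σ (exist _ b outA))
  end.

Definition amalgam_act (x : amalgam) (s : S) : amalgam :=
  match x with
  | inl c => inl (aact C c s)
  | inr (existT Σ (exist b _)) => glue (aact _ b s)
  end.

Variables (Σ : seq (equation A)) (Σ_consistent : consistent Σ).

Lemma glue_inj a : glue (ext_inj (model Σ) a) = inl (e a).
Proof.
rewrite /glue; case: excluded_middle_informative => [inA|[]]; last by exists a.
case: constructive_indefinite_description => a' /= E.
by rewrite ((model_solves Σ_consistent).1.2 _ _ E).
Qed.

Lemma glue_act (b : ext_act (model Σ)) s :
  amalgam_act (glue b) s = glue (aact _ b s).
Proof.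
rewrite {1}/glue; case: excluded_middle_informative => // inA /=.
case: constructive_indefinite_description => a /= <-.
by rewrite -(model_solves Σ_consistent).1.1 glue_inj e_morphism.
Qed.

End Amalgam.

Section Reflect.
Variables (S : monoid) (A : act S) (P Q : nat -> bool) (H : forall m, P m -> Q m).

Definition restrict (o : Omega A Q) (hP : P (nvars (sval o).1)) : Omega A P :=
  exist _ (sval o) (conj (proj1 (proj2_sig o)) (conj hP (proj2 (proj2 (proj2_sig o))))).

Definition to_amalgam (x : carrier A Q) : option (amalgam A (A1 A P)) :=
  match x with
  | inl a => Some (inl (emb A P a))
  | inr (o, u) =>
      match sumbool_of_bool (P (nvars (sval o).1)) with
      | left hP => Some (inl (cls (inr (restrict hP, u))))
      | right _ => option_map (fun b => glue (emb A P) (aact _ b u))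
                     (ext_sol (model (sval o).1) (sval o).2)
      end
  end.

Lemma to_amalgam_act x s :
  to_amalgam (cact x s) = option_map (fun y => amalgam_act (emb A P) y s) (to_amalgam x).
Proof.
case: x => [a|[o u]] /=; first by rewrite emb_morphism.
case: sumbool_of_bool => [hP|_] /=; first by rewrite qact_cls.
case: (ext_sol _ _) => [b|] //=.
by rewrite (glue_act (@emb_morphism _ _ P) (proj1 (proj2_sig o))) aactM.
Qed.

Lemma to_amalgam_gen x y : gen x y -> to_amalgam x = to_amalgam y.
Proof.
case=> [o1 o2 u t E e_Σ|o s a e_Σ] /=.
- case: sumbool_of_bool => h1; case: sumbool_of_bool => h2;
    [|by move: h2; rewrite -E h1|by move: h1; rewrite E h2|].
    by congr (Some (inl _)); apply/cls_eq/k_gen/genH.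
  have [_ /(_ _ e_Σ) [bx [by_ [E1 [E2 bx_by]]]]] := model_solves (proj1 (proj2_sig o1)).
  by rewrite -E E1 E2 /= bx_by.
- case: sumbool_of_bool => hP.
    by congr (Some (inl _)); apply/cls_eq/k_gen/genK.
  have o_Σ := proj1 (proj2_sig o).
  have [_ /(_ _ e_Σ) [bx [-> bx_a]]] := model_solves o_Σ.
  by rewrite /= bx_a glue_inj.
Qed.

Lemma to_amalgam_lift (x : carrier A P) : to_amalgam (lift_car H x) = Some (inl (cls x)).
Proof.
case: x => [a|[o u]] //=.
case: sumbool_of_bool => [hP|]; first by rewrite (Omega_eq (o1 := restrict hP) (o2 := o)) //= sval_lift.
by rewrite sval_lift (proj1 (proj2 (proj2_sig o))).
Qed.

Lemma kappa_reflect (x y : carrier A P) :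
  kappa (lift_car H x) (lift_car H y) -> kappa x y.
Proof.
move/(@kappa_respects _ _ _ _ _ (fun y s => option_map (amalgam_act (emb A P) ^~ s) y)
        to_amalgam_act to_amalgam_gen).
by rewrite !to_amalgam_lift => E; apply/cls_eq; congruence.
Qed.

Lemma liftq_is_embedding : is_embedding (liftq (A := A) H).
Proof.
split=> [X s|X Y].
- have [x ->] := cls_surj X.
  by rewrite /= qact_cls !liftq_cls qact_cls lift_cact.
- have [x ->] := cls_surj X; have [y ->] := cls_surj Y.
  by rewrite !liftq_cls => /cls_eq/kappa_reflect/cls_eq.
Qed.

End Reflect.

Section Embedding.
Variables (S : monoid) (A : act S).

Lemma Pn0 m : Pn 0 m = false.
Proof. by case: m. Qed.

Lemma kappa_Pn0 (x y : carrier A (Pn 0)) : kappa x y -> x = y.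
Proof.
have Omega0 (o : Omega A (Pn 0)) : False by case: o => p [_ []]; rewrite Pn0.
by elim=> // [? ? [o|o]|? ? ? _ -> _ ->|? ? s _ ->] //; case: (Omega0 o).
Qed.

Lemma emb_is_embedding Q : is_embedding (emb A Q).
Proof.
split=> [|a b /cls_eq ab]; first exact: emb_morphism.
have P0Q m : Pn 0 m -> Q m by rewrite Pn0.
by have [] := kappa_Pn0 (kappa_reflect (H := P0Q) (x := inl a) (y := inl b) ab).
Qed.

Lemma liftq_Pinf_cover (y : A1inf A) : exists n (x : A1n A n), y = liftq (Pn_inf (n:=n)) x.
Proof.
have [[a|[[p [p_cons [p_P p_vars]]] u]] ->] := cls_surj y.
  by exists 0, (cls (inl a)); rewrite liftq_cls.
have p_n : Pn (nvars p.1) (nvars p.1) by rewrite /Pn leqnn andbT.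
exists (nvars p.1), (cls (inr (exist _ p (conj p_cons (conj p_n p_vars)), u))).
by rewrite liftq_cls /=; congr (cls (inr (_, u))); apply: Omega_eq.
Qed.

End Embedding.

Section CanonicalSolution.
Variables (S : monoid) (A : act S) (P : nat -> bool) (Σ : seq (equation A)).
Hypotheses (Σ_consistent : consistent Σ) (Σ_P : 0 < nvars Σ -> P (nvars Σ)).

Definition generator x (x_Σ : x \in vars Σ) : Omega A P :=
  exist _ (Σ, x) (conj Σ_consistent (conj (Σ_P (nvars_gt0 x_Σ)) x_Σ)).

Definition canonical_sol (x : nat) : option (A1 A P) :=
  match sumbool_of_bool (x \in vars Σ) with
  | left x_Σ => Some (cls (inr (generator x_Σ, mone S)))
  | right _ => None
  end.

Lemma canonical_sol_vars x (x_Σ : x \in vars Σ) :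
  canonical_sol x = Some (cls (inr (generator x_Σ, mone S))).
Proof.
rewrite /canonical_sol; case: sumbool_of_bool => [x_Σ'|]; last by rewrite x_Σ.
by rewrite (bool_irrelevance x_Σ' x_Σ).
Qed.

Lemma canonical_solution : has_solution_in (emb A P) Σ.
Proof.
exists canonical_sol => -[x s y t|x s a] e_Σ.
- have x_Σ : x \in vars Σ by apply: (in_vars e_Σ); rewrite inE eqxx.
  have y_Σ : y \in vars Σ by apply: (in_vars e_Σ); rewrite !inE eqxx orbT.
  exists (cls (inr (generator x_Σ, mone S))), (cls (inr (generator y_Σ, mone S))).
  rewrite !canonical_sol_vars /= !qact_cls /= !mmul1l.
  by do 2 split => //; apply/cls_eq/k_gen/genH.
- have x_Σ : x \in vars Σ by apply: (in_vars e_Σ); rewrite inE eqxx.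
  exists (cls (inr (generator x_Σ, mone S))).
  rewrite canonical_sol_vars /= !qact_cls /= !mmul1l.
  by split => //; apply/cls_eq/k_gen/genK.
Qed.

End CanonicalSolution.

Section Retraction.
Variables (S : monoid) (A : act S) (P : nat -> bool).

Lemma solvable_of_retract (Σ : seq (equation A)) :
  retract (emb A P) -> consistent Σ -> (0 < nvars Σ -> P (nvars Σ)) ->
  has_solution_in (B := A) id Σ.
Proof.
move=> [r [r_morph r_emb]] Σ_cons Σ_P.
exact: solution_morphism r_morph r_emb (canonical_solution Σ_cons Σ_P).
Qed.

Hypothesis solvable : forall Σ : seq (equation A),
  consistent Σ -> P (nvars Σ) -> has_solution_in (B := A) id Σ.

Definition sol_in_A (Σ : seq (equation A)) : nat -> option A :=
  epsilon (inhabits (fun _ => None)) (fun sol => is_solution (B := A) id sol Σ).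

Lemma sol_in_A_spec Σ :
  consistent Σ -> P (nvars Σ) -> is_solution (B := A) id (sol_in_A Σ) Σ.
Proof.
move=> Σ_cons Σ_P; apply: (epsilon_spec _ (fun sol => is_solution (B := A) id sol Σ)).
exact: solvable.
Qed.

Definition eval_sol (x : carrier A P) : option A :=
  match x with
  | inl a => Some a
  | inr (o, u) => option_map (fun b => aact A b u) (sol_in_A (sval o).1 (sval o).2)
  end.

Lemma eval_sol_act x s : eval_sol (cact x s) = option_map (fun b => aact A b s) (eval_sol x).
Proof. by case: x => [a|[o u]] //=; case: (sol_in_A _ _) => //= b; rewrite aactM. Qed.

Lemma eval_sol_gen x y : gen x y -> eval_sol x = eval_sol y.
Proof.
case=> [o1 o2 u t E e_Σ|o s a e_Σ] /=.
- case: o1 o2 E e_Σ => [[Σ x1] [Σ_cons [Σ_P _]]] [[Σ2 x2] _] /= <- e_Σ.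
  by have [bx [by_ [-> [-> /= ->]]]] := sol_in_A_spec Σ_cons Σ_P e_Σ.
- case: o e_Σ => [[Σ x1] [Σ_cons [Σ_P _]]] /= e_Σ.
  by have [bx [-> /= ->]] := sol_in_A_spec Σ_cons Σ_P e_Σ.
Qed.

Lemma eval_sol_total x : exists a, eval_sol x = Some a.
Proof.
case: x => [a|[[[Σ x] [Σ_cons [Σ_P x_Σ]]] u]] /=; first by exists a.
by have [b ->] := solution_defined (sol_in_A_spec Σ_cons Σ_P) x_Σ; exists (aact A b u).
Qed.

Definition retraction (X : A1 A P) : A :=
  proj1_sig (constructive_indefinite_description _ (eval_sol_total (rep X))).

Lemma eval_sol_cls x : eval_sol x = Some (retraction (cls x)).
Proof.
rewrite /retraction; case: constructive_indefinite_description => a /= <-.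
exact: (@kappa_respects _ _ _ _ _ (fun y s => option_map (aact A ^~ s) y)
          eval_sol_act eval_sol_gen _ _ (k_sym (rep_cls x))).
Qed.

Lemma retract_of_solvable : retract (emb A P).
Proof.
exists retraction; split=> [X s|a]; last by have [] := eval_sol_cls (inl a).
have [x ->] := cls_surj X.
by have := eval_sol_cls (cact x s); rewrite /= qact_cls eval_sol_act eval_sol_cls => -[].
Qed.

End Retraction.

Theorem mainTheorem15 (S : monoid) (A : act S) :
  ((forall n : nat, is_embedding (emb A (Pn n))) /\ is_embedding (emb A Pinf) /\
   (forall (i j : nat) (Hij : i <= j),
      exists f : A1n A i -> A1n A j,
        is_embedding f /\
        forall x : carrier A (Pn i), f (cls x) = cls (lift_car (Pn_le Hij) x)) /\
   (exists f : forall n : nat, A1n A n -> A1inf A,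
      (forall n : nat, is_embedding (f n) /\
         forall x : carrier A (Pn n), f n (cls x) = cls (lift_car (Pn_inf (n:=n)) x)) /\
      (forall y : A1inf A, exists (n : nat) (x : A1n A n), y = f n x))) /\
  (forall (m : nat) (Σ : seq (equation A)), consistent Σ -> nvars Σ = m ->
     has_solution_in (emb A (Pn m)) Σ /\
     (forall n : nat, m <= n -> has_solution_in (emb A (Pn n)) Σ) /\
     has_solution_in (emb A Pinf) Σ) /\
  ((forall n : nat, n_abs_pure A n <-> retract (emb A (Pn n))) /\
   (abs_pure A <-> retract (emb A Pinf))).
Proof.
split; [split; [|split; [|split]]|split; [|split]].
- by move=> n; apply: emb_is_embedding.
- exact: emb_is_embedding.
- move=> i j Hij; exists (liftq (Pn_le Hij)).
  by split; [apply: liftq_is_embedding | apply: liftq_cls].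
- exists (fun n => liftq (Pn_inf (n:=n))); split; last exact: liftq_Pinf_cover.
  by move=> n; split; [apply: liftq_is_embedding | apply: liftq_cls].
- move=> m Σ Σ_cons <-; split; [|split] => [|n m_n|]; apply: canonical_solution => // pos.
  + by rewrite /Pn pos leqnn.
  + by rewrite /Pn pos m_n.
- move=> n; split=> [pure|/solvable_of_retract retr Σ Σ_cons Σ_n].
  + by apply: retract_of_solvable => Σ Σ_cons /andP [_ Σ_n]; apply: pure.
  + by apply: retr => // pos; rewrite /Pn pos.
- split=> [pure|/solvable_of_retract retr n Σ Σ_cons _]; last exact: retr.
  by apply: retract_of_solvable => Σ Σ_cons _; apply: (pure (nvars Σ)).
Qed.
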